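(* There is an absolute constant $C>0$ such that for every $r\ge1$ and all $j,l\in\{0,\ldots,r-1\}$, the local coherences satisfy $$\mu(j,l)\le C\,2^{-j}\,2^{-|j-l|/2}.$$
   Context: Let $n=2^r$, $\mathcal{F}x(\omega)=\frac{1}{\sqrt n}\sum_{t=0}^{n-1}x(t)e^{2\pi i\omega t/n}$ for $x\in\mathbb{C}^n$. Haar vectors: $\psi(t)=2^{-r/2}$ ($0\le t<2^r$); for $l=0,\ldots,r-1$, $p=0,\ldots,2^l-1$: $\phi_{l,p}(t)=2^{(l-r)/2}$ if $p2^{r-l}\le t<(p+\tfrac12)2^{r-l}$, $-2^{(l-r)/2}$ if $(p+\tfrac12)2^{r-l}\le t<(p+1)2^{r-l}$, $0$ otherwise. Frequency bands: $W_0=\{0,1\}$, $W_j=\{-2^j+1,\ldots,-2^{j-1}\}\cup\{2^{j-1}+1,\ldots,2^j\}$ for $j=1,\ldots,r-1$. For $j,l\in\{0,\ldots,r-1\}$, $U_{jl}$ is the matrix with rows indexed by $\omega\in W_j$ and: for $l\ge1$, columns indexed by $p=0,\ldots,2^l-1$ with entries $(U_{jl})_{\omega,p}=\mathcal{F}\phi_{l,p}(\omega)$; for $l=0$, two columns with entries $(U_{j0})_{\omega,0}=\mathcal{F}\psi(\omega)$, $(U_{j0})_{\omega,1}=\mathcal{F}\phi_{0,0}(\omega)$. (These are the blocks of $U=F\Phi$, where $F$ is the DFT matrix with rows indexed by $\omega\in\{-n/2+1,\ldots,n/2\}$ and $\Phi$ has the Haar vectors as columns in the order $\psi,\phi_{0,0},\phi_{1,0},\phi_{1,1},\ldots$.)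 For a matrix $V$, its coherence is $\mu(V)=\max_{a,b}|V_{a,b}|^2$. The $(j,l)$-th local coherence is $\mu(j,l)=\sqrt{\mu(U_{jl})}\,\max_{l'=0,\ldots,r-1}\sqrt{\mu(U_{jl'})}$. *)

From Stdlib Require Import Reals ZArith List Lia.
From Coquelicot Require Import Coquelicot.
Open Scope R_scope.

Definition csum (m : nat) (f : nat -> C) : C :=
  fold_right Cplus (RtoC 0) (map f (seq 0 m)).

Definition cexpi (theta : R) : C := (cos theta, sin theta).

Definition dft (r : nat) (x : nat -> C) (w : Z) : C :=
  let n := (2 ^ r)%nat in
  Cmult (RtoC (/ sqrt (INR n)))
    (csum n (fun t => Cmult (x t) (cexpi (2 * PI * IZR w * INR t / INR n)))).

Definition haar_psi (r : nat) (t : nat) : C := RtoC (/ sqrt (2 ^ r)).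

(* phi_{l,p}(t) = 2^{(l-r)/2} on [p 2^{r-l}, (p+1/2) 2^{r-l}),
   -2^{(l-r)/2} on [(p+1/2) 2^{r-l}, (p+1) 2^{r-l}), 0 otherwise *)
Definition haar_phi (r l p : nat) (t : nat) : C :=
  let blk := (2 ^ (r - l))%nat in
  let a := sqrt (2 ^ l / 2 ^ r) in
  if andb (Nat.leb (p * blk) t) (Nat.ltb (2 * t) (2 * p * blk + blk))%nat
  then RtoC a
  else if andb (Nat.leb (2 * p * blk + blk) (2 * t)) (Nat.ltb t ((p + 1) * blk))%nat
  then RtoC (- a)
  else RtoC 0.

(* Integers a, a+1, ..., b (empty if b < a) *)
Definition zrange (a b : Z) : list Z :=
  map (fun k => (a + Z.of_nat k)%Z) (seq 0 (Z.to_nat (b - a + 1))).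

Definition band (j : nat) : list Z :=
  match j with
  | O => (0 :: 1 :: nil)%Z
  | S _ =>
      zrange (- 2 ^ Z.of_nat j + 1)%Z (- 2 ^ (Z.of_nat j - 1))%Z
      ++ zrange (2 ^ (Z.of_nat j - 1) + 1)%Z (2 ^ Z.of_nat j)%Z
  end.

(* Columns of the block U_{jl}: the Haar vectors at level l *)
Definition level_vectors (r l : nat) : list (nat -> C) :=
  match l with
  | O => haar_psi r :: haar_phi r 0 0 :: nil
  | S _ => map (fun p => haar_phi r l p) (seq 0 (2 ^ l))
  end.

(* max of a list of reals (entries are nonnegative; lists are nonempty) *)
Definition lmax (s : list R) : R := fold_right Rmax 0 s.

Definition block_coherence (r j l : nat) : R :=
  lmax (flat_map (fun w =>
          map (fun v => (Cmod (dft r v w)) ^ 2) (level_vectors r l))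
        (band j)).

Definition local_coherence (r j l : nat) : R :=
  sqrt (block_coherence r j l) *
  lmax (map (fun l' => sqrt (block_coherence r j l')) (seq 0 r)).

(* For [z = e^{i x}] the transform of [phi_{l,p}] is a difference of two geometric sums over
   its halves, so [|1 - z|^2 |sum_t phi_{l,p}(t) z^t|^2 = 2^(l-r) |1 - z^h|^4] with [h = 2^(r-l-1)].
   At the frequency [x = 2 PI w / 2^r], [w] in [W_j], one has [|1 - z|^2 >= x^2/9] and
   [|1 - z^h|^2 <= min (4, (PI w / 2^l)^2)], so [|F phi_{l,p}(w)|^2] is at most [36 * 4^j / 8^l]
   when [j <= l] and [36 * 2^l / 4^j] when [l < j]: in both cases [36 * 2^-j * 2^-|j-l|].
   The constant vector [psi] only sees [w = 0]. Taking square roots gives the claim with [C = 36]. *)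

From Stdlib Require Import Reals ZArith List Lra Lia.
From Coquelicot Require Import Coquelicot.
Open Scope R_scope.

Definition rsum (s m : nat) (f : nat -> C) : C :=
  fold_right Cplus 0 (map f (seq s m)).

Lemma csum_rsum m f : csum m f = rsum 0 m f.
Proof. reflexivity. Qed.

Lemma rsum0 s f : rsum s 0 f = 0.
Proof. reflexivity. Qed.

Lemma rsum_S s m f : rsum s (S m) f = (f s + rsum (S s) m f)%C.
Proof. reflexivity. Qed.

Lemma rsum_add s a b f : rsum s (a + b) f = (rsum s a f + rsum (s + a) b f)%C.
Proof.
  revert s; induction a as [|a IH]; intros s.
  - rewrite Nat.add_0_r. simpl (0 + b)%nat. rewrite rsum0. ring.
  - simpl (S a + b)%nat. rewrite !rsum_S, IH.
    replace (S s + a)%nat with (s + S a)%nat by lia. ring.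
Qed.

Lemma eq_rsum s m f g : (forall t, (s <= t < s + m)%nat -> f t = g t) ->
  rsum s m f = rsum s m g.
Proof.
  revert s; induction m as [|m IH]; intros s H; [reflexivity|].
  rewrite !rsum_S, (H s), (IH (S s)); [reflexivity| |lia].
  intros t Ht; apply H; lia.
Qed.

Lemma rsum_scal s m c f : rsum s m (fun t => c * f t)%C = (c * rsum s m f)%C.
Proof.
  revert s; induction m as [|m IH]; intros s.
  - rewrite !rsum0. ring.
  - rewrite !rsum_S, IH. ring.
Qed.

Lemma rsum_const s m c : rsum s m (fun _ => c) = (INR m * c)%C.
Proof.
  revert s; induction m as [|m IH]; intros s.
  - rewrite rsum0. simpl INR. ring.
  - rewrite rsum_S, IH, S_INR, RtoC_plus. ring.
Qed.

Fixpoint cpow (z : C) (k : nat) : C :=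
  match k with O => 1 | S k => z * cpow z k end.

Lemma cpowD z a b : cpow z (a + b) = (cpow z a * cpow z b)%C.
Proof. induction a as [|a IH]; simpl; [ring| rewrite IH; ring]. Qed.

Lemma cpow1n k : cpow 1 k = 1.
Proof. induction k as [|k IH]; simpl; [reflexivity| rewrite IH; ring]. Qed.

Lemma geometric_rsum z s m :
  ((1 - z) * rsum s m (cpow z))%C = (cpow z s - cpow z (s + m))%C.
Proof.
  revert s; induction m as [|m IH]; intros s.
  - rewrite Nat.add_0_r. rewrite rsum0. ring.
  - rewrite rsum_S.
    transitivity ((1 - z) * cpow z s + (1 - z) * rsum (S s) m (cpow z))%C; [ring|].
    rewrite IH. replace (S s + m)%nat with (s + S m)%nat by lia. simpl. ring.
Qed.

Definition cnorm2 (z : C) : R := fst z ^ 2 + snd z ^ 2.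

Lemma cnorm2M a b : cnorm2 (a * b)%C = cnorm2 a * cnorm2 b.
Proof. destruct a, b. unfold cnorm2, Cmult; simpl. ring. Qed.

Lemma cnorm2_RtoC a : cnorm2 (RtoC a) = a ^ 2.
Proof. unfold cnorm2; simpl. ring. Qed.

Lemma cnorm2_ge0 z : 0 <= cnorm2 z.
Proof. unfold cnorm2. nra. Qed.

Lemma Cmod_sqr z : Cmod z ^ 2 = cnorm2 z.
Proof. unfold Cmod, cnorm2. rewrite pow2_sqrt; [reflexivity|]. nra. Qed.

Lemma cexpiD a b : cexpi (a + b) = (cexpi a * cexpi b)%C.
Proof. unfold cexpi, Cmult; simpl. rewrite cos_plus, sin_plus. f_equal; ring. Qed.

Lemma cexpi0 : cexpi 0 = 1.
Proof. unfold cexpi. rewrite cos_0, sin_0. reflexivity. Qed.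

Lemma cexpi_mul_nat x t : cexpi (x * INR t) = cpow (cexpi x) t.
Proof.
  induction t as [|t IH].
  - rewrite Rmult_0_r. apply cexpi0.
  - rewrite S_INR, Rmult_plus_distr_l, Rmult_1_r, Rplus_comm, cexpiD, IH. reflexivity.
Qed.

Lemma cnorm2_cexpi x : cnorm2 (cexpi x) = 1.
Proof. unfold cnorm2, cexpi; simpl. pose proof (sin2_cos2 x) as E. unfold Rsqr in E. nra. Qed.

Lemma cnorm2_1_sub_cexpi x : cnorm2 (1 - cexpi x)%C = 2 - 2 * cos x.
Proof.
  unfold cnorm2, cexpi, Cminus, Cplus, Copp; simpl.
  pose proof (sin2_cos2 x) as E. unfold Rsqr in E. nra.
Qed.

Lemma two_sub_two_cos x : 2 - 2 * cos x = 4 * sin (x / 2) ^ 2.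
Proof. replace x with (2 * (x / 2)) at 1 by field. rewrite cos_2a_sin. ring. Qed.

Lemma two_sub_two_cos_le4 x : 2 - 2 * cos x <= 4.
Proof. pose proof (COS_bound x). lra. Qed.

Lemma two_sub_two_cos_ge0 x : 0 <= 2 - 2 * cos x.
Proof. pose proof (COS_bound x). lra. Qed.

Lemma sin_sqr_le_nonneg y : 0 <= y -> sin y ^ 2 <= y ^ 2.
Proof.
  intros Hy. destruct (Req_dec y 0) as [->|Hn]; [rewrite sin_0; lra|].
  assert (Hup := sin_lt_x y ltac:(lra)).
  assert (Hlow : - y <= sin y).
  { destruct (Rle_dec y 1).
    - pose proof PI2_1. pose proof (sin_ge_0 y Hy ltac:(lra)). lra.
    - pose proof (SIN_bound y). lra. }
  nra.
Qed.

Lemma sin_sqr_le y : sin y ^ 2 <= y ^ 2.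
Proof.
  destruct (Rle_dec 0 y) as [Hy|Hy]; [now apply sin_sqr_le_nonneg|].
  replace (sin y ^ 2) with (sin (- y) ^ 2) by (rewrite sin_neg; ring).
  replace (y ^ 2) with ((- y) ^ 2) by ring.
  apply sin_sqr_le_nonneg; lra.
Qed.

Lemma two_sub_two_cos_le_sqr x : 2 - 2 * cos x <= x ^ 2.
Proof. rewrite two_sub_two_cos. pose proof (sin_sqr_le (x / 2)). nra. Qed.

(* On [0, PI/2] the Taylor bound [y - y^3/6 <= sin y] gives [y/3 <= sin y]. *)
Lemma two_sub_two_cos_ge_sqr x : Rabs x <= PI -> x ^ 2 / 9 <= 2 - 2 * cos x.
Proof.
  intros Hx. rewrite two_sub_two_cos.
  assert (Hsin : forall y, 0 <= y <= PI / 2 -> y / 3 <= sin y).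
  { intros y [H0 H1]. pose proof PI_4.
    destruct (pre_sin_bound y 0 H0 ltac:(lra)) as [Hs _].
    unfold sin_approx, sin_term in Hs. simpl in Hs. nra. }
  replace (sin (x / 2) ^ 2) with (sin (Rabs x / 2) ^ 2).
  - pose proof (Hsin (Rabs x / 2) ltac:(split; [pose proof (Rabs_pos x)|]; lra)).
    rewrite <- (pow2_abs x). pose proof (Rabs_pos x). nra.
  - unfold Rabs. destruct (Rcase_abs x); [|reflexivity].
    replace (- x / 2) with (- (x / 2)) by field. rewrite sin_neg. ring.
Qed.

Lemma INR_pow2 k : INR (2 ^ k) = 2 ^ k.
Proof. rewrite pow_INR. reflexivity. Qed.

Lemma pow2_gt0 k : 0 < 2 ^ k.
Proof. apply pow_lt; lra. Qed.

Lemma cnorm2_sqrt_inv_pow2 r : cnorm2 (RtoC (/ sqrt (2 ^ r))) = / 2 ^ r.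
Proof.
  rewrite cnorm2_RtoC, pow_inv, <- Rsqr_pow2, Rsqr_sqrt by (left; apply pow2_gt0).
  reflexivity.
Qed.

Definition freq (r : nat) (w : Z) : R := 2 * PI * IZR w / 2 ^ r.

Lemma cnorm2_dft r v w : cnorm2 (dft r v w) =
  cnorm2 (csum (2 ^ r) (fun t => v t * cpow (cexpi (freq r w)) t)%C) / 2 ^ r.
Proof.
  unfold dft; cbv zeta. rewrite cnorm2M, INR_pow2, cnorm2_sqrt_inv_pow2, !csum_rsum.
  erewrite eq_rsum.
  - unfold Rdiv. apply Rmult_comm.
  - intros t _. cbv beta. rewrite <- cexpi_mul_nat. unfold freq, Rdiv.
    do 2 f_equal. ring.
Qed.

Ltac haar_phi_cases HB := unfold haar_phi; cbv zeta; rewrite HB;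
  repeat match goal with
  | |- context [Nat.leb ?a ?b] => destruct (Nat.leb_spec a b)
  | |- context [Nat.ltb ?a ?b] => destruct (Nat.ltb_spec a b)
  end; simpl; try reflexivity; try (exfalso; nia).

Lemma haar_phi_csum r l p f : (l < r)%nat -> (p < 2 ^ l)%nat ->
  csum (2 ^ r) (fun t => haar_phi r l p t * f t)%C =
  (sqrt (2 ^ l / 2 ^ r) *
   (rsum (p * 2 ^ (r - l)) (2 ^ (r - S l)) f
    - rsum (p * 2 ^ (r - l) + 2 ^ (r - S l)) (2 ^ (r - S l)) f))%C.
Proof.
  intros Hl Hp. set (h := (2 ^ (r - S l))%nat). set (a := sqrt (2 ^ l / 2 ^ r)).
  assert (HB : (2 ^ (r - l) = 2 * h)%nat).
  { unfold h. replace (r - l)%nat with (S (r - S l)) by lia. reflexivity. }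
  assert (Hr : (2 ^ r = 2 ^ l * (2 * h))%nat).
  { rewrite <- HB, <- Nat.pow_add_r. f_equal. lia. }
  rewrite HB, csum_rsum.
  replace (2 ^ r)%nat with (p * (2 * h) + h + h + (2 ^ r - (p + 1) * (2 * h)))%nat by nia.
  rewrite !rsum_add. simpl (0 + _)%nat.
  rewrite (eq_rsum 0 _ _ (fun _ => 0)) by (intros t Ht; haar_phi_cases HB; ring).
  rewrite (eq_rsum (p * (2 * h)) _ _ (fun t => a * f t)%C) by (intros t Ht; haar_phi_cases HB).
  rewrite (eq_rsum (p * (2 * h) + h) _ _ (fun t => - a * f t)%C)
    by (intros t Ht; haar_phi_cases HB; rewrite RtoC_opp; reflexivity).
  rewrite (eq_rsum (p * (2 * h) + h + h) _ _ (fun _ => 0))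
    by (intros t Ht; haar_phi_cases HB; ring).
  rewrite !rsum_const, !rsum_scal. ring.
Qed.

Lemma haar_phi_transform r l p x : (l < r)%nat -> (p < 2 ^ l)%nat ->
  (2 - 2 * cos x) * cnorm2 (csum (2 ^ r) (fun t => haar_phi r l p t * cpow (cexpi x) t)%C)
  = 2 ^ l / 2 ^ r * (2 - 2 * cos (x * INR (2 ^ (r - S l)))) ^ 2.
Proof.
  intros Hl Hp. rewrite (haar_phi_csum r l p _ Hl Hp).
  set (s := (p * 2 ^ (r - l))%nat). set (h := (2 ^ (r - S l))%nat).
  set (a := sqrt (2 ^ l / 2 ^ r)). set (z := cexpi x).
  assert (Ha : a ^ 2 = 2 ^ l / 2 ^ r).
  { unfold a. rewrite <- Rsqr_pow2, Rsqr_sqrt; [reflexivity|].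
    pose proof (pow2_gt0 l). pose proof (pow2_gt0 r).
    apply Rlt_le, Rdiv_lt_0_compat; assumption. }
  assert (E : ((1 - z) * (a * (rsum s h (cpow z) - rsum (s + h) h (cpow z))))%C
            = (a * (cpow z s * ((1 - cpow z h) * (1 - cpow z h))))%C).
  { transitivity (a * ((1 - z) * rsum s h (cpow z) - (1 - z) * rsum (s + h) h (cpow z)))%C;
      [ring|].
    rewrite !geometric_rsum, !cpowD. ring. }
  rewrite <- cnorm2_1_sub_cexpi, <- cnorm2M. fold z. rewrite E, !cnorm2M, cnorm2_RtoC, Ha.
  unfold z. rewrite <- !cexpi_mul_nat, cnorm2_cexpi, cnorm2_1_sub_cexpi. ring.
Qed.

Lemma haar_phi_csum_cpow1 r l p : (l < r)%nat -> (p < 2 ^ l)%nat ->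
  csum (2 ^ r) (fun t => haar_phi r l p t * cpow 1 t)%C = 0.
Proof.
  intros Hl Hp. rewrite (haar_phi_csum r l p _ Hl Hp).
  rewrite !(eq_rsum _ _ (cpow 1) (fun _ => 1)) by (intros; apply cpow1n).
  rewrite !rsum_const. ring.
Qed.

Lemma haar_psi_transform r x :
  (2 - 2 * cos x) * cnorm2 (csum (2 ^ r) (fun t => haar_psi r t * cpow (cexpi x) t)%C)
  = (2 - 2 * cos (x * INR (2 ^ r))) / 2 ^ r.
Proof.
  unfold haar_psi. rewrite csum_rsum, (rsum_scal 0 _ _ (cpow (cexpi x))).
  rewrite <- cnorm2_1_sub_cexpi, <- cnorm2M.
  replace ((1 - cexpi x) * ((/ sqrt (2 ^ r))%R * rsum 0 (2 ^ r) (cpow (cexpi x))))%C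
    with ((/ sqrt (2 ^ r))%R * ((1 - cexpi x) * rsum 0 (2 ^ r) (cpow (cexpi x))))%C by ring.
  rewrite geometric_rsum, cnorm2M, cnorm2_sqrt_inv_pow2, Nat.add_0_l.
  change (cpow (cexpi x) 0) with (RtoC 1).
  rewrite <- cexpi_mul_nat, cnorm2_1_sub_cexpi. unfold Rdiv. ring.
Qed.

Lemma haar_psi_csum_cpow1 r :
  cnorm2 (csum (2 ^ r) (fun t => haar_psi r t * cpow 1 t)%C) = 2 ^ r.
Proof.
  unfold haar_psi. rewrite csum_rsum.
  rewrite (eq_rsum _ _ _ (fun _ => RtoC (/ sqrt (2 ^ r)))) by (intros; rewrite cpow1n; ring).
  rewrite rsum_const, cnorm2M, cnorm2_sqrt_inv_pow2, cnorm2_RtoC, INR_pow2.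
  pose proof (pow2_gt0 r). field. lra.
Qed.

Lemma freq0 r : freq r 0 = 0.
Proof. unfold freq. rewrite Rmult_0_r. apply Rdiv_0_l. Qed.

Lemma freq_mul_half_block r l w : (l < r)%nat ->
  freq r w * INR (2 ^ (r - S l)) = PI * IZR w / 2 ^ l.
Proof.
  intros Hl. unfold freq. rewrite INR_pow2.
  replace r with (S l + (r - S l))%nat at 1 by lia. rewrite pow_add.
  pose proof (pow2_gt0 l). pose proof (pow2_gt0 (r - S l)). simpl. field. lra.
Qed.

Lemma Rabs_freq_le_PI r j w : (j < r)%nat -> Rabs (IZR w) <= 2 ^ j -> Rabs (freq r w) <= PI.
Proof.
  intros Hj Hw. pose proof PI_RGT_0. pose proof (pow2_gt0 r).
  assert (Hjr : 2 * 2 ^ j <= 2 ^ r) by (apply (Rle_pow 2 (S j)); [lra|lia]).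
  unfold freq, Rdiv. rewrite !Rabs_mult, Rabs_inv, (Rabs_right 2), (Rabs_right PI),
    (Rabs_right (2 ^ r)) by lra.
  apply (Rmult_le_reg_r (2 ^ r)); [lra|]. field_simplify; [nra|lra].
Qed.

Lemma cos_2PI_IZR k : cos (2 * PI * IZR k) = 1.
Proof.
  assert (Hnat : forall m, cos (2 * PI * INR m) = 1).
  { intros m. replace (2 * PI * INR m) with (0 + 2 * INR m * PI) by ring.
    rewrite cos_period. apply cos_0. }
  destruct (Z_le_gt_dec 0 k).
  - rewrite <- (Z2Nat.id k), <- INR_IZR_INZ by lia. apply Hnat.
  - replace k with (- Z.of_nat (Z.to_nat (- k)))%Z by lia.
    rewrite opp_IZR, <- INR_IZR_INZ, Ropp_mult_distr_r_reverse, cos_neg. apply Hnat.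
Qed.

Lemma dft_haar_phi_identity r l p w : (l < r)%nat -> (p < 2 ^ l)%nat ->
  (2 - 2 * cos (freq r w)) * cnorm2 (dft r (haar_phi r l p) w) =
  2 ^ l / (2 ^ r) ^ 2 * (2 - 2 * cos (PI * IZR w / 2 ^ l)) ^ 2.
Proof.
  intros Hl Hp. pose proof (pow2_gt0 r).
  rewrite cnorm2_dft, Rmult_div_assoc, (haar_phi_transform r l p _ Hl Hp),
    (freq_mul_half_block r l w Hl).
  field. lra.
Qed.

Lemma cnorm2_dft_haar_phi0 r l p : (l < r)%nat -> (p < 2 ^ l)%nat ->
  cnorm2 (dft r (haar_phi r l p) 0) = 0.
Proof.
  intros Hl Hp. rewrite cnorm2_dft, freq0, cexpi0, (haar_phi_csum_cpow1 r l p Hl Hp),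
    cnorm2_RtoC.
  unfold Rdiv. ring.
Qed.

Lemma cnorm2_dft_haar_psi0 r : cnorm2 (dft r (haar_psi r) 0) = 1.
Proof.
  rewrite cnorm2_dft, freq0, cexpi0, haar_psi_csum_cpow1.
  pose proof (pow2_gt0 r). field. lra.
Qed.

(* [1 - e^{i x}] vanishes only at multiples of [2 PI], while [e^{i x 2^r} = 1]. *)
Lemma cnorm2_dft_haar_psi r w : w <> 0%Z -> Rabs (freq r w) <= PI ->
  cnorm2 (dft r (haar_psi r) w) = 0.
Proof.
  intros Hw Hfreq. pose proof (pow2_gt0 r).
  assert (Hx : freq r w <> 0).
  { unfold freq. pose proof PI_RGT_0. apply not_0_IZR in Hw.
    unfold Rdiv. apply Rmult_integral_contrapositive; split; [|apply Rinv_neq_0_compat; lra].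
    apply Rmult_integral_contrapositive; split; lra. }
  assert (HW : 0 < 2 - 2 * cos (freq r w)).
  { eapply Rlt_le_trans; [|apply two_sub_two_cos_ge_sqr; exact Hfreq].
    pose proof (pow2_gt0 1). apply Rdiv_lt_0_compat; [|lra]. nra. }
  pose proof (haar_psi_transform r (freq r w)) as E.
  replace (freq r w * INR (2 ^ r)) with (2 * PI * IZR w) in E
    by (unfold freq; rewrite INR_pow2; field; lra).
  rewrite cos_2PI_IZR in E. replace ((2 - 2 * 1) / 2 ^ r) with 0 in E by (field; lra).
  apply Rmult_integral in E. destruct E as [E|E]; [lra|].
  rewrite cnorm2_dft, E. apply Rdiv_0_l.
Qed.

Lemma entry_estimate L N w E : 0 < L -> 0 < N -> w <> 0 ->
  Rabs (2 * PI * w / N) <= PI -> 0 <= E ->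
  (2 - 2 * cos (2 * PI * w / N)) * E = L / N ^ 2 * (2 - 2 * cos (PI * w / L)) ^ 2 ->
  E <= 9 * L * (2 - 2 * cos (PI * w / L)) ^ 2 / (4 * PI ^ 2 * w ^ 2).
Proof.
  intros HL HN Hw Hx HE Hid. pose proof PI_RGT_0.
  set (V := 2 - 2 * cos (PI * w / L)) in *.
  assert (Hw2 : 0 < w ^ 2) by (rewrite <- Rsqr_pow2; apply Rsqr_pos_lt; exact Hw).
  set (c := (2 * PI * w / N) ^ 2 / 9).
  assert (Hc : 0 < c).
  { unfold c. replace ((2 * PI * w / N) ^ 2) with (4 * PI ^ 2 * w ^ 2 / N ^ 2) by (field; lra).
    apply Rdiv_lt_0_compat; [|lra]. apply Rdiv_lt_0_compat; [|apply pow_lt; lra].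
    apply Rmult_lt_0_compat; [|exact Hw2]. apply Rmult_lt_0_compat; [lra|apply pow_lt; lra]. }
  apply (Rmult_le_reg_r c); [exact Hc|].
  replace (9 * L * V ^ 2 / (4 * PI ^ 2 * w ^ 2) * c) with (L / N ^ 2 * V ^ 2)
    by (unfold c; field; lra).
  rewrite <- Hid, Rmult_comm. apply Rmult_le_compat_r; [exact HE|].
  apply two_sub_two_cos_ge_sqr, Hx.
Qed.

(* Below the wavelet's own frequency its transform is small since the two halves nearly cancel. *)
Lemma entry_estimate_low L J w :
  0 < L -> w <> 0 -> w ^ 2 <= J ^ 2 -> J ^ 2 <= L ^ 2 ->
  9 * L * (2 - 2 * cos (PI * w / L)) ^ 2 / (4 * PI ^ 2 * w ^ 2) <= 36 / L.
Proof.
  intros HL Hw HwJ HJL. pose proof PI_RGT_0. pose proof PI_4.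
  assert (Hw2 : 0 < w ^ 2) by (rewrite <- Rsqr_pow2; apply Rsqr_pos_lt; exact Hw).
  assert (HV := two_sub_two_cos_le_sqr (PI * w / L)).
  assert (HV0 := two_sub_two_cos_ge0 (PI * w / L)).
  set (V := 2 - 2 * cos (PI * w / L)) in *.
  assert (HV2 : V ^ 2 <= (PI * w / L) ^ 4).
  { replace ((PI * w / L) ^ 4) with (((PI * w / L) ^ 2) ^ 2) by ring. apply pow_incr; lra. }
  assert (Hden : 0 < PI ^ 2 * w ^ 2) by (apply Rmult_lt_0_compat; [apply pow_lt|]; lra).
  apply (Rmult_le_reg_r (4 * PI ^ 2 * w ^ 2 * L ^ 3));
    [apply Rmult_lt_0_compat; [nra|apply pow_lt; lra]|].
  replace (9 * L * V ^ 2 / (4 * PI ^ 2 * w ^ 2) * (4 * PI ^ 2 * w ^ 2 * L ^ 3))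
    with (9 * L ^ 4 * V ^ 2) by (field; repeat split; try assumption; lra).
  replace (36 / L * (4 * PI ^ 2 * w ^ 2 * L ^ 3)) with (144 * PI ^ 2 * w ^ 2 * L ^ 2) by (field; lra).
  assert (HV4 : L ^ 4 * V ^ 2 <= PI ^ 4 * w ^ 4).
  { replace (PI ^ 4 * w ^ 4) with (L ^ 4 * (PI * w / L) ^ 4) by (field; lra).
    apply Rmult_le_compat_l; [apply pow_le; lra| exact HV2]. }
  assert (PI ^ 2 <= 16) by nra.
  assert (PI ^ 2 * w ^ 2 <= 16 * L ^ 2) by nra.
  nra.
Qed.

(* Above it, [|1 - e^{i x}|^2 <= 4] and the [1/w^2] decay of the denominator take over. *)
Lemma entry_estimate_high L J w :
  0 < L -> 0 < J -> J <= 2 * Rabs w ->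
  9 * L * (2 - 2 * cos (PI * w / L)) ^ 2 / (4 * PI ^ 2 * w ^ 2) <= 36 * L / J ^ 2.
Proof.
  intros HL HJ HwJ. pose proof PI_RGT_0. pose proof PI2_3_2.
  pose proof (Rabs_pos w).
  assert (HJ2 : J ^ 2 <= 4 * w ^ 2).
  { rewrite <- (pow2_abs w). replace (4 * Rabs w ^ 2) with ((2 * Rabs w) ^ 2) by ring.
    apply pow_incr; lra. }
  assert (HJ0 : 0 < J ^ 2) by (apply pow_lt; lra).
  assert (Hw2 : 0 < w ^ 2) by lra.
  assert (Hw : w <> 0) by (intros ->; rewrite pow_i in Hw2 by lia; lra).
  assert (HV := two_sub_two_cos_le4 (PI * w / L)).
  assert (HV0 := two_sub_two_cos_ge0 (PI * w / L)).
  set (V := 2 - 2 * cos (PI * w / L)) in *.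
  assert (Hden : 0 < PI ^ 2 * w ^ 2) by (apply Rmult_lt_0_compat; [apply pow_lt|]; lra).
  apply (Rmult_le_reg_r (4 * PI ^ 2 * w ^ 2 * J ^ 2)); [nra|].
  replace (9 * L * V ^ 2 / (4 * PI ^ 2 * w ^ 2) * (4 * PI ^ 2 * w ^ 2 * J ^ 2))
    with (9 * L * V ^ 2 * J ^ 2) by (field; repeat split; try assumption; lra).
  replace (36 * L / J ^ 2 * (4 * PI ^ 2 * w ^ 2 * J ^ 2))
    with (144 * L * (PI ^ 2 * w ^ 2)) by (field; lra).
  assert (V ^ 2 <= 16) by nra.
  assert (HPI : 4 <= PI ^ 2) by nra.
  assert (J ^ 2 <= PI ^ 2 * w ^ 2) by nra.
  assert (L * V ^ 2 <= 16 * L) by nra.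
  nra.
Qed.

Lemma in_zrange x a b : In x (zrange a b) -> (a <= x <= b)%Z.
Proof.
  unfold zrange. intros H. apply in_map_iff in H. destruct H as [k [<- Hk]].
  apply in_seq in Hk. lia.
Qed.

Lemma in_band j w : In w (band j) ->
  (w = 0%Z /\ j = 0%nat) \/
  (w <> 0 /\ 2 ^ Z.of_nat j <= 2 * Z.abs w /\ Z.abs w <= 2 ^ Z.of_nat j)%Z.
Proof.
  destruct j as [|j]; intros H; unfold band in H.
  - destruct H as [H|[H|[]]]; [left; lia| right; subst; simpl; lia].
  - right. replace (Z.of_nat (S j) - 1)%Z with (Z.of_nat j) in H by lia.
    assert (E : (2 ^ Z.of_nat (S j) = 2 * 2 ^ Z.of_nat j)%Z).
    { rewrite Nat2Z.inj_succ, Z.pow_succ_r by lia. reflexivity. }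
    rewrite E in *. assert (0 < 2 ^ Z.of_nat j)%Z by (apply Z.pow_pos_nonneg; lia).
    apply in_app_or in H. destruct H as [H|H]; apply in_zrange in H; lia.
Qed.

Lemma in_band_abs j w : In w (band j) ->
  (w = 0%Z /\ j = 0%nat) \/
  (w <> 0%Z /\ 2 ^ j <= 2 * Rabs (IZR w) /\ Rabs (IZR w) <= 2 ^ j).
Proof.
  intros H. destruct (in_band j w H) as [Hw|[Hw [Hlow Hup]]]; [now left|right].
  rewrite pow_IZR, Rabs_Zabs, <- mult_IZR. split; [exact Hw|split; apply IZR_le; assumption].
Qed.

Definition level_dist (j l : nat) : nat := Z.abs_nat (Z.of_nat j - Z.of_nat l).

Lemma pow2_level_dist_le j l : (j <= l)%nat -> 2 ^ j * 2 ^ level_dist j l = 2 ^ l.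
Proof. intros H. rewrite <- pow_add. f_equal. unfold level_dist. lia. Qed.

Lemma pow2_level_dist_ge j l : (l <= j)%nat -> 2 ^ l * 2 ^ level_dist j l = 2 ^ j.
Proof. intros H. rewrite <- pow_add. f_equal. unfold level_dist. lia. Qed.

Definition coherence_bound (j l : nat) : R := 36 / 2 ^ j / 2 ^ level_dist j l.

Lemma coherence_bound_gt0 j l : 0 < coherence_bound j l.
Proof.
  unfold coherence_bound. pose proof (pow2_gt0 j). pose proof (pow2_gt0 (level_dist j l)).
  repeat apply Rdiv_lt_0_compat; lra.
Qed.

Lemma cnorm2_dft_haar_phi_le r j l p w : (j < r)%nat -> (l < r)%nat -> (p < 2 ^ l)%nat ->
  In w (band j) -> cnorm2 (dft r (haar_phi r l p) w) <= coherence_bound j l.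
Proof.
  intros Hj Hl Hp Hw. pose proof (pow2_gt0 j) as HJ. pose proof (pow2_gt0 l) as HL.
  destruct (in_band_abs j w Hw) as [[-> _]|[Hw0 [Hlow Hup]]].
  { rewrite cnorm2_dft_haar_phi0 by assumption. apply Rlt_le, coherence_bound_gt0. }
  assert (HE := entry_estimate (2 ^ l) (2 ^ r) (IZR w) _ HL (pow2_gt0 r) (not_0_IZR _ Hw0)
    (Rabs_freq_le_PI r j w Hj Hup) (cnorm2_ge0 _) (dft_haar_phi_identity r l p w Hl Hp)).
  pose proof (pow2_gt0 (level_dist j l)).
  destruct (Nat.le_gt_cases j l) as [Hjl|Hjl].
  - replace (coherence_bound j l) with (36 / 2 ^ l)
      by (unfold coherence_bound; rewrite <- (pow2_level_dist_le j l Hjl); field; lra).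
    eapply Rle_trans; [exact HE|].
    apply (entry_estimate_low _ (2 ^ j)); [lra|now apply not_0_IZR| |].
    + rewrite <- (pow2_abs (IZR w)). apply pow_incr. split; [apply Rabs_pos|exact Hup].
    + apply pow_incr. split; [lra|]. apply Rle_pow; [lra|exact Hjl].
  - replace (coherence_bound j l) with (36 * 2 ^ l / (2 ^ j) ^ 2)
      by (unfold coherence_bound; rewrite <- (pow2_level_dist_ge j l) by lia; field; lra).
    eapply Rle_trans; [exact HE|]. apply entry_estimate_high; lra.
Qed.

Lemma cnorm2_dft_haar_psi_le r j w : (j < r)%nat -> In w (band j) ->
  cnorm2 (dft r (haar_psi r) w) <= coherence_bound j 0.
Proof.
  intros Hj Hw. pose proof (coherence_bound_gt0 j 0).
  destruct (in_band_abs j w Hw) as [[-> ->]|[Hw0 [_ Hup]]].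
  - rewrite cnorm2_dft_haar_psi0. unfold coherence_bound, level_dist. simpl. lra.
  - rewrite (cnorm2_dft_haar_psi r w Hw0 (Rabs_freq_le_PI r j w Hj Hup)). lra.
Qed.

Lemma cnorm2_dft_level_vector_le r j l v w : (j < r)%nat -> (l < r)%nat ->
  In v (level_vectors r l) -> In w (band j) -> cnorm2 (dft r v w) <= coherence_bound j l.
Proof.
  intros Hj Hl Hv Hw. destruct l as [|l'].
  - destruct Hv as [<-|[<-|[]]].
    + now apply cnorm2_dft_haar_psi_le.
    + apply cnorm2_dft_haar_phi_le; auto.
  - apply in_map_iff in Hv. destruct Hv as [p [<- Hp]]. apply in_seq in Hp.
    apply cnorm2_dft_haar_phi_le; auto; lia.
Qed.

Lemma lmax_le s M : 0 <= M -> (forall x, In x s -> x <= M) -> lmax s <= M.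
Proof.
  intros HM. induction s as [|a s IH]; intros H; simpl; [exact HM|].
  apply Rmax_lub; [apply H; left; reflexivity|apply IH; intros x Hx; apply H; right; exact Hx].
Qed.

Lemma lmax_ge0 s : 0 <= lmax s.
Proof. induction s as [|a s IH]; simpl; [lra|]. eapply Rle_trans; [exact IH|apply Rmax_r]. Qed.

Lemma block_coherence_le r j l : (j < r)%nat -> (l < r)%nat ->
  block_coherence r j l <= coherence_bound j l.
Proof.
  intros Hj Hl. apply lmax_le; [apply Rlt_le, coherence_bound_gt0|].
  intros x Hx. apply in_flat_map in Hx. destruct Hx as [w [Hw Hx]].
  apply in_map_iff in Hx. destruct Hx as [v [<- Hv]].
  rewrite Cmod_sqr. now apply cnorm2_dft_level_vector_le.
Qed.

Lemma coherence_bound_le j l : coherence_bound j l <= 36 / 2 ^ j.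
Proof.
  unfold coherence_bound. pose proof (pow2_gt0 j).
  assert (1 <= 2 ^ level_dist j l) by (apply pow_R1_Rle; lra).
  apply Rmult_le_reg_r with (2 ^ level_dist j l); [lra|].
  unfold Rdiv at 1. rewrite Rmult_assoc, Rinv_l, Rmult_1_r by lra.
  rewrite <- (Rmult_1_r (36 / 2 ^ j)) at 1. apply Rmult_le_compat_l; [|assumption].
  apply Rlt_le, Rdiv_lt_0_compat; lra.
Qed.

Lemma sqrt_div_mul_sqrt a d : 0 <= a -> 0 < d -> sqrt (a / d) * sqrt a = a / sqrt d.
Proof.
  intros Ha Hd. rewrite sqrt_div_alt, Rmult_comm by exact Hd. unfold Rdiv.
  rewrite <- Rmult_assoc, sqrt_sqrt by exact Ha. reflexivity.
Qed.

Lemma Rpower2_opp_half k : Rpower 2 (- INR k / 2) = / sqrt (2 ^ k).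
Proof.
  replace (- INR k / 2) with (- (INR k * / 2)) by (unfold Rdiv; ring).
  rewrite Rpower_Ropp, <- Rpower_mult, Rpower_pow, Rpower_sqrt by (apply pow2_gt0 || lra).
  reflexivity.
Qed.

Theorem lemma2 :
  exists Cst : R, 0 < Cst /\
    forall r j l : nat, (1 <= r)%nat -> (j < r)%nat -> (l < r)%nat ->
      local_coherence r j l <=
        Cst * Rpower 2 (- INR j) * Rpower 2 (- IZR (Z.abs (Z.of_nat j - Z.of_nat l)) / 2).
Proof.
  exists 36. split; [lra|]. intros r j l _ Hj Hl.
  rewrite <- Nat2Z.inj_abs_nat, <- INR_IZR_INZ. fold (level_dist j l).
  rewrite Rpower2_opp_half, Rpower_Ropp, Rpower_pow by lra.
  pose proof (pow2_gt0 j). pose proof (pow2_gt0 (level_dist j l)).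
  assert (Hrow : lmax (map (fun l' => sqrt (block_coherence r j l')) (seq 0 r))
                 <= sqrt (36 / 2 ^ j)).
  { apply lmax_le; [apply sqrt_pos|]. intros x Hx.
    apply in_map_iff in Hx. destruct Hx as [l' [<- Hl']]. apply in_seq in Hl'.
    apply sqrt_le_1_alt. eapply Rle_trans; [apply block_coherence_le; lia|].
    apply coherence_bound_le. }
  unfold local_coherence. eapply Rle_trans.
  - apply Rmult_le_compat; [apply sqrt_pos|apply lmax_ge0| |exact Hrow].
    apply sqrt_le_1_alt, block_coherence_le; assumption.
  - unfold coherence_bound. rewrite sqrt_div_mul_sqrt.
    + unfold Rdiv. right. ring.
    + apply Rlt_le, Rdiv_lt_0_compat; lra.
    + exact H0.
Qed.
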